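(* Let $J\ge1$, $K,L\ge 0$, $p,q,n_1,\dots,n_J\ge1$, $n=\sum_j n_j$, $\mathbf X_\cdot\in\mathbb R^{p\times n}$, $\mathbf Y_\cdot=[\mathbf Y_1,\dots,\mathbf Y_J]\in\mathbb R^{q\times n}$ with $\mathbf Y_j\in\mathbb R^{q\times n_j}$, binary matrices $\mathbf C_Y\in\{0,1\}^{J\times K}$, $\mathbf C_S\in\{0,1\}^{J\times L}$, and penalties $\lambda_B^{(k)}>0$, $\lambda_S^{(l)}>0$. Define $\mathbf Y_\cdot^{(k)}=[\mathbf Y_1^{(k)},\dots,\mathbf Y_J^{(k)}]$ with $\mathbf Y_j^{(k)}=\mathbf Y_j$ if $\mathbf C_Y[j,k]=1$ and $\mathbf 0_{q\times n_j}$ otherwise; let $\mathcal S_l$ be the set of $p\times n$ matrices whose $j$-th column block (of width $n_j$) is zero whenever $\mathbf C_S[j,l]=0$. Let $$f(\{\mathbf B_k\},\{\mathbf S^{(l)}\})=\tfrac12\Big\|\mathbf X_\cdot-\sum_{k}\mathbf B_k\mathbf Y_\cdot^{(k)}-\sum_{l}\mathbf S^{(l)}\Big\|_F^2+\sum_k\lambda_B^{(k)}\|\mathbf B_k\|_*+\sum_l\lambda_S^{(l)}\|\mathbf S^{(l)}\|_*$$ over $\mathbf B_k\in\mathbb R^{p\times q}$, $\mathbf S^{(l)}\in\mathcal S_l$. The following conditions are needed to allow non-zero estimation of the modules, in the sense that if a listed condition fails, then for every minimizer of $f$ there is another minimizer of $f$ (with objective value no larger) in which the indicated module is zero: 1.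 (module $\mathbf B_k$) Let $\mathcal I_k\subset\{1,\dots,K\}\setminus\{k\}$ be any set with $\sum_{i\in\mathcal I_k}\mathbf C_Y[\cdot,i]=c_y\,\mathbf C_Y[\cdot,k]$ for some positive integer $c_y$. Then $\lambda_B^{(k)}<\frac1{c_y}\sum_{i\in\mathcal I_k}\lambda_B^{(i)}$. 2. (module $\mathbf B_k$) Let $\mathcal I_k\subset\{1,\dots,L\}$ be any set with $\sum_{i\in\mathcal I_k}\mathbf C_S[\cdot,i]=c_{sy}\,\mathbf C_Y[\cdot,k]$ for some positive integer $c_{sy}$. Then $\lambda_B^{(k)}<\frac1{c_{sy}}\sum_{i\in\mathcal I_k}\lambda_S^{(i)}\|\mathbf Y_\cdot^{(k)}\|_*$. 3. (module $\mathbf S^{(l')}$) For $l\ne l'$ with $\mathbf C_S[j,l]\ge\mathbf C_S[j,l']$ for all $j$: $\lambda_S^{(l')}<\lambda_S^{(l)}$. 4. (module $\mathbf S^{(l)}$) Let $\mathcal I_l\subset\{1,\dots,L\}\setminus\{l\}$ be any set with $\sum_{i\in\mathcal I_l}\mathbf C_S[\cdot,i]=c_s\,\mathbf C_S[\cdot,l]$ for some positive integer $c_s$. Then $\lambda_S^{(l)}<\frac1{c_s}\sum_{i\in\mathcal I_l}\lambda_S^{(i)}$.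
   Context: $\|\cdot\|_*$ is the nuclear norm and $\|\cdot\|_F$ the Frobenius norm; $\mathbf C[\cdot,i]$ denotes the $i$-th column of $\mathbf C$. The indicator matrices specify on which cohorts (column blocks) each module is present. *)

From HB Require Import structures.
From mathcomp Require Import all_boot all_order all_algebra.
From mathcomp Require Import polyrcf reals.
Set Implicit Arguments.
Unset Strict Implicit.
Unset Printing Implicit Defensive.
Import Order.TTheory GRing.Theory Num.Theory.
Local Open Scope ring_scope.

Section Defs.
Variable R : realType.

Definition frob2 (m n : nat) (A : 'M[R]_(m, n)) : R :=
  \sum_(i < m) \sum_(j < n) (A i j) ^+ 2.

(* Nuclear norm = sum of the singular values of A, i.e. of the square roots
   of the eigenvalues (with algebraic multiplicity) of A^T A; these
   eigenvalues are the roots of the characteristic polynomial of A^T A,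
   which are all real and nonnegative. *)
Definition nucnorm (m n : nat) (A : 'M[R]_(m, n)) : R :=
  let P := char_poly (A^T *m A) in
  \sum_(x <- rootsR P) (mup x P)%:R * Num.sqrt x.

Variables (J : nat) (nj : 'I_J -> nat).
Local Notation n := (\sum_(j < J) nj j)%N.

Definition maskblocks (m : nat) (c : 'I_J -> bool) (Y : 'M[R]_(m, n))
  : 'M[R]_(m, n) :=
  \mxrow_(j < J) (if c j then submxrow Y j else 0).

Definition in_blockset (m : nat) (c : 'I_J -> bool) (S : 'M[R]_(m, n)) : Prop :=
  forall j : 'I_J, c j = false -> submxrow S j = 0.

Variables (K L p q : nat).
Variables (X : 'M[R]_(p, n)) (Y : 'M[R]_(q, n)).
Variables (CY : 'I_J -> 'I_K -> bool) (CS : 'I_J -> 'I_L -> bool).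
Variables (lamB : 'I_K -> R) (lamS : 'I_L -> R).

Definition Yk (k : 'I_K) : 'M[R]_(q, n) := maskblocks (fun j => CY j k) Y.

Definition feasible (S : 'I_L -> 'M[R]_(p, n)) : Prop :=
  forall l : 'I_L, in_blockset (fun j => CS j l) (S l).

Definition fobj (B : 'I_K -> 'M[R]_(p, q)) (S : 'I_L -> 'M[R]_(p, n)) : R :=
  2^-1 * frob2 (X - \sum_(k < K) (B k *m Yk k) - \sum_(l < L) S l)
  + \sum_(k < K) lamB k * nucnorm (B k)
  + \sum_(l < L) lamS l * nucnorm (S l).

Definition is_minimizer (B : 'I_K -> 'M[R]_(p, q)) (S : 'I_L -> 'M[R]_(p, n))
  : Prop :=
  feasible S /\
  forall (B' : 'I_K -> 'M[R]_(p, q)) (S' : 'I_L -> 'M[R]_(p, n)),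
    feasible S' -> fobj B S <= fobj B' S'.

Definition module_removable
  (zero : ('I_K -> 'M[R]_(p, q)) -> ('I_L -> 'M[R]_(p, n)) -> Prop) : Prop :=
  forall B S, is_minimizer B S ->
    exists B' S', [/\ is_minimizer B' S', fobj B' S' <= fobj B S & zero B' S'].

End Defs.

From HB Require Import structures.
From mathcomp Require Import all_boot all_order all_algebra.
From mathcomp Require Import polyrcf reals complex spectral sesquilinear ring lra.
Import Order.TTheory GRing.Theory Num.Theory.
Local Open Scope ring_scope.
Set Implicit Arguments.
Unset Strict Implicit.
Unset Printing Implicit Defensive.

(* The nuclear norm is characterised variationally:
     nucnorm A = min { (|U|_F^2 + |V|_F^2) / 2 | A = U V^T },
   which follows from the spectral theorem for the Hermitian matrix A^T A
   over R[i].  This gives the triangle inequality, positive homogeneity,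
   submultiplicativity, and that zeroing column blocks does not increase the
   nuclear norm.
   If a condition fails, the module in question can be moved into the modules
   that cover it without changing the fitted matrix
   sum_k B_k Y^(k) + sum_l S^(l).  For instance, if the columns of C_Y indexed
   by I cover column k exactly c times, then B_k Y^(k) = sum_(i in I) c^-1 B_k Y^(i),
   so adding c^-1 B_k to every B_i (i in I) and deleting B_k keeps the fit and
   changes the penalty by at most (c^-1 sum_(i in I) lamB_i - lamB_k) |B_k|_*,
   which is <= 0.  The new point is therefore again a minimizer, and the
   module is zero in it. *)

Lemma cauchy_schwarz_sum (F : realFieldType) n (u v : 'I_n -> F) :
  (\sum_k u k * v k) ^+ 2 <= (\sum_k u k ^+ 2) * (\sum_k v k ^+ 2).
Proof.
set A := \sum_k u k ^+ 2; set B := \sum_k v k ^+ 2; set S := \sum_k u k * v k.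
have A0 : 0 <= A by apply: sumr_ge0 => k _; exact: sqr_ge0.
have quad_ge0 t : 0 <= t ^+ 2 * A - 2 * t * S + B.
  have -> : t ^+ 2 * A - 2 * t * S + B = \sum_k (t * u k - v k) ^+ 2.
    rewrite /A /S /B !mulr_sumr -sumrN -!big_split /=.
    by apply: eq_bigr => k _; ring.
  by apply: sumr_ge0 => k _; exact: sqr_ge0.
have [Az|Anz] := eqVneq A 0.
  have u0 k : u k = 0.
    have /eqP : u k ^+ 2 = 0 by apply: (psumr_eq0P _ Az) => // j' _; exact: sqr_ge0.
    by rewrite sqrf_eq0 => /eqP.
  by rewrite Az /S big1 ?expr0n ?mul0r //= => k _; rewrite u0 mul0r.
have Agt0 : 0 < A by rewrite lt_def Anz A0.
have := quad_ge0 (S / A).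
have -> : (S / A) ^+ 2 * A - 2 * (S / A) * S + B = B - S ^+ 2 / A by field.
by rewrite subr_ge0 ler_pdivrMr // mulrC.
Qed.

Section Frobenius.
Variable R : realType.

Lemma frob2_ge0 a b (M : 'M[R]_(a, b)) : 0 <= frob2 M.
Proof. by apply: sumr_ge0 => i _; apply: sumr_ge0 => j _; exact: sqr_ge0. Qed.

Lemma frob2Z a b (t : R) (M : 'M[R]_(a, b)) : frob2 (t *: M) = t ^+ 2 * frob2 M.
Proof.
rewrite /frob2 mulr_sumr; apply: eq_bigr => i _; rewrite mulr_sumr.
by apply: eq_bigr => j _; rewrite mxE exprMn.
Qed.

Lemma frob2_0 a b : frob2 (0 : 'M[R]_(a, b)) = 0.
Proof. by rewrite -(scale0r (0 : 'M[R]_(a, b))) frob2Z expr0n mul0r. Qed.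

Lemma frob2_eq0 a b (M : 'M[R]_(a, b)) : frob2 M = 0 -> M = 0.
Proof.
move=> M0; apply/matrixP => i j; rewrite mxE.
have Mi0 : \sum_j M i j ^+ 2 = 0.
  by apply: (psumr_eq0P _ M0) => // i' _; apply: sumr_ge0 => j' _; exact: sqr_ge0.
have /eqP : M i j ^+ 2 = 0 by apply: (psumr_eq0P _ Mi0) => // j' _; exact: sqr_ge0.
by rewrite sqrf_eq0 => /eqP.
Qed.

Lemma frob2_tr a b (M : 'M[R]_(a, b)) : frob2 M^T = frob2 M.
Proof. by rewrite /frob2 exchange_big; do 2!apply: eq_bigr => ? _; rewrite mxE. Qed.

Lemma frob2_row_mx a b c (M : 'M[R]_(a, b)) (N : 'M[R]_(a, c)) :
  frob2 (row_mx M N) = frob2 M + frob2 N.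
Proof.
rewrite /frob2 -big_split; apply: eq_bigr => i _.
by rewrite big_split_ord /=; congr (_ + _); apply: eq_bigr => j _;
  rewrite ?row_mxEl ?row_mxEr.
Qed.

Lemma frob2M_le a b c (M : 'M[R]_(a, b)) (N : 'M[R]_(b, c)) :
  frob2 (M *m N) <= frob2 M * frob2 N.
Proof.
rewrite /frob2 [X in _ <= _ * X]exchange_big mulr_suml; apply: ler_sum => i _.
rewrite mulr_sumr; apply: ler_sum => j _; rewrite mxE.
exact: (cauchy_schwarz_sum (fun k => M i k) (fun k => N k j)).
Qed.

End Frobenius.

Lemma char_poly_invmx_conj (F : fieldType) n (P D : 'M[F]_n) : P \in unitmx ->
  char_poly (invmx P *m D *m P) = char_poly D.
Proof.
move=> Pu; rewrite /char_poly /char_poly_mx.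
set Q := map_mx polyC (invmx P); set Pp := map_mx polyC P.
have QP : Q *m Pp = 1%:M by rewrite -map_mxM mulVmx // map_mx1.
have PQ : Pp *m Q = 1%:M by rewrite -map_mxM mulmxV // map_mx1.
have -> : 'X%:M - map_mx polyC (invmx P *m D *m P)
   = Q *m ('X%:M - map_mx polyC D) *m Pp.
  rewrite mulmxBr mulmxBl !map_mxM -/Q -/Pp; congr (_ - _).
  by rewrite mul_mx_scalar -scalemxAl QP scalemx1.
by rewrite !det_mulmx mulrC mulrA -det_mulmx PQ det1 mul1r.
Qed.

Lemma sum_mup_rootsR_prod_XsubC (R : rcfType) (s : seq R) (f : R -> R)
    (P := \prod_(x <- s) ('X - x%:P)) :
  \sum_(x <- rootsR P) (mup x P)%:R * f x = \sum_(x <- s) f x.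
Proof.
have P0 : P != 0 by rewrite monic_neq0 // monic_prod_XsubC.
have roots_undup : perm_eq (rootsR P) (undup s).
  apply: uniq_perm; rewrite ?undup_uniq ?uniq_roots // => x.
  by rewrite mem_undup -(roots_on_rootsR P0) root_prod_XsubC itv_boundlr.
rewrite (perm_big _ roots_undup) -[RHS]big_undup_iterop_count.
apply: eq_bigr => x _.
by rewrite mu_prod_XsubC Monoid.iteropE iter_addr_0 mulr_natl.
Qed.

Section NuclearNormFactorization.
Variable R : realType.
Local Notation C := (R[i]).
Local Notation toC := (real_complex R).
Local Notation cmx A := (map_mx toC A).
Local Notation "M ^*t" := ((M ^t*)%sesqui) (at level 2).

Lemma real_complex_real (x : R) : toC x \is Num.real.
Proof. by apply/complex_realP; exists x. Qed.

Lemma trmxC_mul a b c (M : 'M[C]_(a, b)) (N : 'M[C]_(b, c)) :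
  (M *m N)^*t = N^*t *m M^*t.
Proof. by rewrite trmx_mul map_mxM. Qed.

Lemma trmxC_real a b (M : 'M[R]_(a, b)) : (cmx M)^*t = cmx M^T.
Proof. by apply/matrixP => i j; rewrite !mxE conj_Creal // real_complex_real. Qed.

Definition cdiag n (x : 'I_n -> R) : 'M[C]_n := diag_mx (\row_k toC (x k)).

Lemma trmxC_cdiag n (x : 'I_n -> R) : (cdiag x)^*t = cdiag x.
Proof.
rewrite /cdiag tr_diag_mx; apply/matrixP => i j; rewrite !mxE.
by case: eqP => _; rewrite ?mulr1n ?mulr0n ?conj_Creal ?real_complex_real ?rmorph0.
Qed.

Lemma cdiagM n (x y : 'I_n -> R) : cdiag x *m cdiag y = cdiag (fun k => x k * y k).
Proof.
by rewrite /cdiag mulmx_diag; congr diag_mx; apply/rowP => k; rewrite !mxE rmorphM.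
Qed.

Lemma mxtrace_cdiag n (x : 'I_n -> R) : \tr (cdiag x) = toC (\sum_k x k).
Proof. by rewrite mxtrace_diag rmorph_sum; apply: eq_bigr => k _; rewrite mxE. Qed.

Lemma eq_cdiag n (x y : 'I_n -> R) : x =1 y -> cdiag x = cdiag y.
Proof. by move=> xy; congr diag_mx; apply/rowP => k; rewrite !mxE xy. Qed.

Definition cfrob2 a b (M : 'M[C]_(a, b)) := \tr (M^*t *m M).

Lemma cfrob2E a b (M : 'M[C]_(a, b)) : cfrob2 M = \sum_k \sum_i M i k * (M i k)^*.
Proof.
rewrite /cfrob2 /mxtrace; apply: eq_bigr => k _; rewrite mxE.
by apply: eq_bigr => i _; rewrite !mxE mulrC.
Qed.

Lemma cfrob2_ge0 a b (M : 'M[C]_(a, b)) : 0 <= cfrob2 M.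
Proof. by rewrite cfrob2E; do 2![apply: sumr_ge0 => ? _]; exact: mul_conjC_ge0. Qed.

Lemma cfrob2_real a b (M : 'M[R]_(a, b)) : cfrob2 (cmx M) = toC (frob2 M).
Proof.
rewrite cfrob2E /frob2 exchange_big rmorph_sum; apply: eq_bigr => k _.
rewrite rmorph_sum; apply: eq_bigr => i _.
by rewrite mxE conj_Creal ?real_complex_real // expr2 rmorphM.
Qed.

Lemma cfrob2_unitary a b (M : 'M[C]_(a, b)) (Z : 'M[C]_b) :
  Z \is unitarymx -> cfrob2 (M *m Z) = cfrob2 M.
Proof.
move=> /unitarymxP ZZ; rewrite /cfrob2 trmxC_mul -mulmxA mxtrace_mulC.
by rewrite -!mulmxA ZZ mulmx1 mxtrace_mulC.
Qed.

(* W W^* is an orthogonal projection: this is Bessel's inequality. *)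
Lemma cfrob2_partial_isometry m n r (W : 'M[C]_(m, n)) (U : 'M[C]_(m, r)) :
  W *m (W^*t *m W) = W -> cfrob2 (W^*t *m U) <= cfrob2 U.
Proof.
move=> WW; set Q := W *m W^*t; set P : 'M_m := 1%:M - Q.
have Pt : P^*t = P by rewrite linearB /= map_mxB trmxC_mul trmxCK trmx1 map_mx1.
have PP : P *m P = P.
  have QQ : Q *m Q = Q by rewrite mulmxA -[W *m _ *m W]mulmxA WW.
  by rewrite mulmxBl mul1mx mulmxBr mulmx1 QQ subrr subr0.
have E : (P *m U)^*t *m (P *m U) = U^*t *m U - (W^*t *m U)^*t *m (W^*t *m U).
  rewrite trmxC_mul Pt -mulmxA [P *m (P *m U)]mulmxA PP mulmxBl mul1mx mulmxBr.
  by congr (_ - _); rewrite trmxC_mul trmxCK !mulmxA.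
by have := cfrob2_ge0 (P *m U); rewrite /cfrob2 E linearB /= subr_ge0.
Qed.

Lemma mxtrace_mul_le n r (M : 'M[C]_(n, r)) (N : 'M[C]_(r, n)) :
  \tr (M *m N) + (\tr (M *m N))^* <= cfrob2 M + cfrob2 N.
Proof.
have amgm (x y : C) : x * y + (x * y)^* <= x * x^* + y * y^*.
  rewrite rmorphM -subr_ge0.
  have -> : x * x^* + y * y^* - (x * y + x^* * y^*) = (x^* - y) * (x^* - y)^*.
    by rewrite rmorphB /= conjCK; ring.
  exact: mul_conjC_ge0.
rewrite !cfrob2E [X in _ <= X + _]exchange_big /mxtrace rmorph_sum -!big_split.
apply: ler_sum => k _; rewrite mxE rmorph_sum -!big_split.
by apply: ler_sum => t _; exact: amgm.
Qed.

Definition mx_ReIm a b (M : 'M[C]_(a, b)) : 'M[R]_(a, b + b) :=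
  row_mx (map_mx (@complex.Re R) M) (map_mx (@complex.Im R) M).

Lemma cfrob2_ReIm a b (M : 'M[C]_(a, b)) : cfrob2 M = toC (frob2 (mx_ReIm M)).
Proof.
rewrite cfrob2E exchange_big frob2_row_mx /frob2 -big_split rmorph_sum.
apply: eq_bigr => i _; rewrite -big_split rmorph_sum; apply: eq_bigr => j _.
by rewrite !mxE; have := add_Re2_Im2 (M i j); rewrite normCK => <-.
Qed.

Lemma mulmx_ReIm m n r (U : 'M[C]_(m, r)) (V : 'M[C]_(n, r)) :
  mx_ReIm U *m (mx_ReIm V)^T = map_mx (@complex.Re R) (U *m V^*t).
Proof.
apply/matrixP => i j; rewrite tr_row_mx mul_row_col !mxE raddf_sum -big_split.
apply: eq_bigr => k _; rewrite !mxE.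
by case: (U i k) => a b; case: (V j k) => c d /=; ring.
Qed.

Lemma gram_spectral m n (A : 'M[R]_(m, n)) :
  exists (mu : 'I_n -> R) (Z : 'M[C]_n),
  [/\ Z \is unitarymx,
      (cmx A *m Z)^*t *m (cmx A *m Z) = cdiag mu
    & char_poly (A^T *m A) = \prod_k ('X - (mu k)%:P)].
Proof.
set S := (cmx A)^*t *m cmx A.
have S_real : S = cmx (A^T *m A) by rewrite /S trmxC_real map_mxM.
have S_herm : S \is hermsymmx.
  apply: realsym_hermsym.
    apply/is_hermitianmxP; rewrite expr0 scale1r map_mx_id //.
    by rewrite S_real map_trmx trmx_mul trmxK.
  by apply/mxOverP => i j; rewrite S_real mxE real_complex_real.
have /orthomx_spectralP S_diag := hermitian_normalmx S_herm.
have d_real := hermitian_spectral_diag_real S_herm.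
set P := spectralmx S in S_diag; set d := spectral_diag S in S_diag d_real.
have P_unitary : P \is unitarymx := spectral_unitarymx S.
pose mu k := complex.Re (d 0 k).
have dE : d = \row_k toC (mu k).
  by apply/rowP => k; rewrite mxE RRe_real //; move/mxOverP: d_real; apply.
exists mu, P^*t; split; first by rewrite trmxC_unitary.
  rewrite trmxC_mul trmxCK -mulmxA [_ *m (cmx A *m _)]mulmxA -/S S_diag.
  by rewrite invmx_unitary // !mulmxA mulmxtVK // (unitarymxP P_unitary) mul1mx dE.
apply: (map_poly_inj toC).
rewrite map_char_poly -S_real S_diag char_poly_invmx_conj ?unitarymx_unit //.
rewrite char_poly_trig ?diag_mx_is_trig // rmorph_prod; apply: eq_bigr => k _.
by rewrite /= map_polyXsubC dE !mxE eqxx mulr1n.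
Qed.

Lemma nucnorm_singular_values m n (A : 'M[R]_(m, n)) :
  exists (s : 'I_n -> R) (Z : 'M[C]_n),
  [/\ forall k, 0 <= s k, Z \is unitarymx,
      (cmx A *m Z)^*t *m (cmx A *m Z) = cdiag (fun k => s k ^+ 2)
    & nucnorm A = \sum_k s k].
Proof.
have [mu [Z [Z_unitary gram char_gram]]] := gram_spectral A.
have mu_ge0 k : 0 <= mu k.
  rewrite -ler0c; have /matrixP/(_ k k) := gram.
  rewrite !mxE eqxx mulr1n => <-.
  by apply: sumr_ge0 => i _; rewrite !mxE mulrC; exact: mul_conjC_ge0.
exists (fun k => Num.sqrt (mu k)), Z; split => //.
- by move=> k; exact: sqrtr_ge0.
- by rewrite gram; apply: eq_cdiag => k; rewrite sqr_sqrtr.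
rewrite /nucnorm /= char_gram -(big_map mu predT (fun x => 'X - x%:P)).
by rewrite sum_mup_rootsR_prod_XsubC big_map.
Qed.

Lemma gram_diag_eq0 m n (G : 'M[C]_(m, n)) k :
  (G^*t *m G) k k = 0 -> forall i, G i k = 0.
Proof.
move=> Gkk0 i; have /eqP : (G i k)^* * G i k = 0.
  have Gkk : \sum_j (G j k)^* * G j k = 0.
    by rewrite -[RHS]Gkk0 mxE; apply: eq_bigr => j _; rewrite !mxE.
  by apply: (psumr_eq0P _ Gkk) => // j _; rewrite mulrC; exact: mul_conjC_ge0.
by rewrite mulf_eq0 conjC_eq0 orbb => /eqP.
Qed.

Lemma gram_cdiag_isometry m n (G : 'M[C]_(m, n)) (s : 'I_n -> R)
    (W := G *m cdiag (fun k => (s k)^-1)) :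
  G^*t *m G = cdiag (fun k => s k ^+ 2) ->
  W *m (W^*t *m W) = W /\ W^*t *m G = cdiag s.
Proof.
move=> gram.
have WG : W^*t *m G = cdiag s.
  rewrite trmxC_mul trmxC_cdiag -mulmxA gram cdiagM; apply: eq_cdiag => k.
  by have [->|sk0] := eqVneq (s k) 0; rewrite ?invr0 ?mul0r // expr2 mulKf.
have -> : W^*t *m W = cdiag s *m cdiag (fun k => (s k)^-1).
  by rewrite [in X in _ *m X]/W mulmxA WG.
split=> //; rewrite /W -mulmxA !cdiagM.
congr (G *m _); apply: eq_cdiag => k.
by have [->|sk0] := eqVneq (s k) 0; rewrite ?invr0 ?mul0r // mulfV // mulr1.
Qed.

(* For W := U V^T Z diag(s^-1), tr (W^* U V^T Z) = sum_k s_k; bound its real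
   part by AM-GM, then use Bessel for W^* U and unitary invariance for V^T Z. *)
Lemma nucnorm_mul_tr_le m n r (U : 'M[R]_(m, r)) (V : 'M[R]_(n, r)) :
  nucnorm (U *m V^T) <= (frob2 U + frob2 V) / 2.
Proof.
have [s [Z [_ Z_unitary gram ->]]] := nucnorm_singular_values (U *m V^T).
have [W_pisom WG] := gram_cdiag_isometry gram.
set W := _ *m cdiag _ in W_pisom WG.
pose a := W^*t *m cmx U; pose b := (cmx V)^T *m Z.
have tr_ab : \tr (a *m b) = toC (\sum_k s k).
  by rewrite -mulmxA [cmx U *m _]mulmxA [(cmx V)^T]map_trmx -map_mxM WG mxtrace_cdiag.
have a_le : cfrob2 a <= toC (frob2 U).
  by rewrite -cfrob2_real; exact: cfrob2_partial_isometry.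
have b_eq : cfrob2 b = toC (frob2 V).
  by rewrite cfrob2_unitary // map_trmx cfrob2_real frob2_tr.
have := mxtrace_mul_le a b; rewrite tr_ab conj_Creal ?real_complex_real //.
move=> /le_trans/(_ (lerD a_le (lexx _))); rewrite b_eq -!rmorphD /= lecR.
lra.
Qed.

(* A = U V^* over C for U := A Z diag(s^-1/2) and V := Z diag(s^1/2); the real and
   imaginary parts of U and V then give a real factorization of the same size. *)
Lemma nucnorm_factor m n (A : 'M[R]_(m, n)) :
  exists r (U : 'M[R]_(m, r)) (V : 'M[R]_(n, r)),
  [/\ A = U *m V^T, frob2 U = nucnorm A & frob2 V = nucnorm A].
Proof.
have [s [Z [s_ge0 Z_unitary gram ->]]] := nucnorm_singular_values A.
have ZtZ : Z^*t *m Z = 1%:M by rewrite -[Z^*t]mul1mx mulmxKtV.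
have GZ : cmx A *m Z *m Z^*t = cmx A by rewrite mulmxtVK.
move: (cmx A *m Z) gram GZ => G gram GZ.
pose t k := Num.sqrt (s k).
pose U := G *m cdiag (fun k => (t k)^-1).
pose V := Z *m cdiag t.
have UV : U *m V^*t = cmx A.
  rewrite trmxC_mul trmxC_cdiag mulmxA -[U *m _]mulmxA cdiagM -GZ; congr (_ *m _).
  apply/matrixP => i k; rewrite mul_mx_diag !mxE.
  have [tk0|tk_neq0] := eqVneq (t k) 0; last by rewrite mulVf // mulr1.
  rewrite (gram_diag_eq0 _ i) ?mul0r // gram !mxE eqxx mulr1n.
  by rewrite -[s k]sqr_sqrtr // -/(t k) tk0 !expr0n.
have U_frob : cfrob2 U = toC (\sum_k s k).
  rewrite /cfrob2 trmxC_mul trmxC_cdiag -mulmxA [G^*t *m _]mulmxA gram.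
  rewrite !cdiagM mxtrace_cdiag; congr toC; apply: eq_bigr => k _.
  rewrite -[s k]sqr_sqrtr // -/(t k).
  by have [->|tk0] := eqVneq (t k) 0; rewrite ?invr0 ?mul0r //; field.
have V_frob : cfrob2 V = toC (\sum_k s k).
  rewrite /cfrob2 trmxC_mul trmxC_cdiag -mulmxA [Z^*t *m _]mulmxA ZtZ mul1mx.
  rewrite cdiagM mxtrace_cdiag; congr toC; apply: eq_bigr => k _.
  by rewrite -expr2 sqr_sqrtr.
exists (n + n)%N, (mx_ReIm U), (mx_ReIm V); split.
- by rewrite mulmx_ReIm UV; apply/matrixP => i j; rewrite !mxE.
- by apply: complexI; rewrite -cfrob2_ReIm U_frob.
- by apply: complexI; rewrite -cfrob2_ReIm V_frob.
Qed.

End NuclearNormFactorization.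

Section NuclearNorm.
Variable R : realType.

Lemma nucnorm_ge0 m n (A : 'M[R]_(m, n)) : 0 <= nucnorm A.
Proof. by have [r [U [V [_ <- _]]]] := nucnorm_factor A; exact: frob2_ge0. Qed.

Lemma nucnorm0 m n : nucnorm (0 : 'M[R]_(m, n)) = 0.
Proof.
apply/le_anti; rewrite nucnorm_ge0 andbT.
have := nucnorm_mul_tr_le (0 : 'M[R]_(m, 0)) (0 : 'M[R]_(n, 0)).
by rewrite mul0mx !frob2_0; lra.
Qed.

Lemma nucnormD_le m n (A B : 'M[R]_(m, n)) : nucnorm (A + B) <= nucnorm A + nucnorm B.
Proof.
have [r1 [U1 [V1 [-> U1_frob V1_frob]]]] := nucnorm_factor A.
have [r2 [U2 [V2 [-> U2_frob V2_frob]]]] := nucnorm_factor B.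
have := nucnorm_mul_tr_le (row_mx U1 U2) (row_mx V1 V2).
rewrite tr_row_mx mul_row_col !frob2_row_mx U1_frob V1_frob U2_frob V2_frob.
by rewrite -mulr2n -[(_ + _) *+ 2]mulr_natr mulfK ?pnatr_eq0.
Qed.

Lemma nucnormZ_le m n (t : R) (A : 'M[R]_(m, n)) :
  0 <= t -> nucnorm (t *: A) <= t * nucnorm A.
Proof.
move=> t_ge0; have [r [U [V [-> U_frob V_frob]]]] := nucnorm_factor A.
have := nucnorm_mul_tr_le (Num.sqrt t *: U) (Num.sqrt t *: V).
rewrite !frob2Z sqr_sqrtr // linearZ /= -scalemxAl -scalemxAr scalerA.
by rewrite -expr2 sqr_sqrtr // U_frob V_frob; lra.
Qed.

(* With optimal factorizations A = U V^T and B = P Q^T, A B = (s U) (s^-1 W)^T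
   for W = Q P^T V, and s^2 = nucnorm B balances the two Frobenius norms. *)
Lemma nucnormM_le m n r (A : 'M[R]_(m, n)) (B : 'M[R]_(n, r)) :
  nucnorm (A *m B) <= nucnorm A * nucnorm B.
Proof.
have [r1 [U [V [AE U_frob V_frob]]]] := nucnorm_factor A.
have [r2 [P [Q [BE P_frob Q_frob]]]] := nucnorm_factor B.
set t := nucnorm B in P_frob Q_frob *.
have [t0|t_neq0] := eqVneq t 0.
  have -> : B = 0 by rewrite BE (frob2_eq0 (etrans P_frob t0)) mul0mx.
  by rewrite mulmx0 nucnorm0 t0 mulr0.
have t_gt0 : 0 < t by rewrite lt_def t_neq0 nucnorm_ge0.
pose W := Q *m (P^T *m V).
have AB : A *m B = (Num.sqrt t *: U) *m ((Num.sqrt t)^-1 *: W)^T.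
  rewrite AE BE /W linearZ /= -scalemxAl -scalemxAr scalerA mulrV; last first.
    by rewrite unitfE sqrtr_eq0 -ltNge.
  by rewrite scale1r !trmx_mul !trmxK !mulmxA.
have W_frob : frob2 W <= t * (t * nucnorm A).
  apply: le_trans (frob2M_le _ _) _; rewrite Q_frob ler_pM2l //.
  by apply: le_trans (frob2M_le _ _) _; rewrite frob2_tr P_frob V_frob.
have := nucnorm_mul_tr_le (Num.sqrt t *: U) ((Num.sqrt t)^-1 *: W).
rewrite -AB !frob2Z exprVn (sqr_sqrtr (ltW t_gt0)) U_frob => /le_trans; apply.
have : t^-1 * frob2 W <= t * nucnorm A.
  by rewrite ler_pdivrMl // mulrA -expr2; apply: le_trans W_frob _; rewrite expr2 mulrA.
by have := nucnorm_ge0 A; lra.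
Qed.

End NuclearNorm.

Lemma submxrowZ (R : pzRingType) m J (nj : 'I_J -> nat) (a : R)
    (M : 'M[R]_(m, \sum_(j < J) nj j)) j :
  submxrow (a *: M) j = a *: submxrow M j.
Proof. by apply/matrixP => i k; rewrite !mxE. Qed.

Section BlockMasks.
Variables (R : realType) (J : nat) (nj : 'I_J -> nat).
Local Notation n := (\sum_(j < J) nj j)%N.

Lemma maskblocksE m c (M : 'M[R]_(m, n)) j :
  submxrow (maskblocks c M) j = if c j then submxrow M j else 0.
Proof. exact: mxrowK. Qed.

Lemma maskblocks_entry m c (M : 'M[R]_(m, n)) i k :
  maskblocks c M i k = if c (tagnat.sig1 k) then M i k else 0.
Proof. by rewrite /maskblocks mxE; case: (c _); rewrite !mxE ?tagnat.sig2K. Qed.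

Lemma maskblocks_mulmx m r c (U : 'M[R]_(m, r)) (M : 'M[R]_(r, n)) :
  maskblocks c (U *m M) = U *m maskblocks c M.
Proof.
apply/mxrowP => j; rewrite -mul_submxrow !maskblocksE.
by case: (c j); rewrite ?mul_submxrow ?mulmx0.
Qed.

Lemma frob2_maskblocks_le m c (M : 'M[R]_(m, n)) : frob2 (maskblocks c M) <= frob2 M.
Proof.
apply: ler_sum => i _; apply: ler_sum => k _; rewrite maskblocks_entry.
by case: ifP => _ //; rewrite expr0n /= sqr_ge0.
Qed.

Lemma nucnorm_maskblocks_le m c (M : 'M[R]_(m, n)) :
  nucnorm (maskblocks c M) <= nucnorm M.
Proof.
have [r [U [V [ME U_frob V_frob]]]] := nucnorm_factor M.
have := nucnorm_mul_tr_le U (maskblocks c V^T)^T.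
rewrite trmxK -maskblocks_mulmx -ME frob2_tr => /le_trans; apply.
by have := frob2_maskblocks_le c V^T; rewrite frob2_tr; lra.
Qed.

Lemma maskblocks_id m c (M : 'M[R]_(m, n)) : in_blockset c M -> maskblocks c M = M.
Proof.
by move=> Mc; apply/mxrowP => j; rewrite maskblocksE; case cj: (c j) => //; rewrite Mc.
Qed.

Lemma sum_maskblocks (T : finType) m (I : {set T}) (cs : T -> 'I_J -> bool)
    (c0 : 'I_J -> bool) (c : nat) (M : 'M[R]_(m, n)) :
  (forall j, \sum_(i in I) (cs i j : nat) = c * c0 j)%N ->
  \sum_(i in I) maskblocks (cs i) M = c%:R *: maskblocks c0 M.
Proof.
move=> cover; apply/mxrowP => j.
rewrite submxrow_sum submxrowZ maskblocksE.
rewrite (eq_bigr (fun i => (cs i j : nat)%:R *: submxrow M j)); last first.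
  by move=> i _; rewrite maskblocksE; case: (cs i j); rewrite ?scale1r ?scale0r.
rewrite -scaler_suml -natr_sum cover natrM.
by case: (c0 j); rewrite ?mulr1 ?mulr0 ?scale0r ?scaler0.
Qed.

Lemma in_blockset0 m c : in_blockset c (0 : 'M[R]_(m, n)).
Proof. by move=> j _; rewrite submxrow0. Qed.

Lemma in_blocksetD m c (A B : 'M[R]_(m, n)) :
  in_blockset c A -> in_blockset c B -> in_blockset c (A + B).
Proof. by move=> Ac Bc j cj; rewrite submxrowD Ac // Bc // addr0. Qed.

Lemma in_blocksetZ m c (a : R) (A : 'M[R]_(m, n)) :
  in_blockset c A -> in_blockset c (a *: A).
Proof. by move=> Ac j cj; rewrite submxrowZ Ac // scaler0. Qed.

Lemma in_blockset_maskblocks m c (A : 'M[R]_(m, n)) : in_blockset c (maskblocks c A).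
Proof. by move=> j cj; rewrite maskblocksE cj. Qed.

End BlockMasks.

Section Redistribution.
Variables (T : finType) (V : zmodType).

Definition augment_on (F D : T -> V) (I : {set T}) : T -> V :=
  fun i => if i \in I then F i + D i else F i.

Definition zero_at (F : T -> V) (k : T) : T -> V :=
  fun i => if i == k then 0 else F i.

Lemma sum_augment_on (F D : T -> V) (I : {set T}) :
  \sum_i augment_on F D I i = \sum_i F i + \sum_(i in I) D i.
Proof.
rewrite (eq_bigr (fun i => F i + (if i \in I then D i else 0))); last first.
  by move=> i _; rewrite /augment_on; case: ifP; rewrite ?addr0.
by rewrite big_split /= -big_mkcond.
Qed.

Lemma sum_zero_at (F : T -> V) (k : T) : \sum_i zero_at F k i = \sum_i F i - F k.
Proof.
rewrite [in RHS](bigD1 k) //= addrC addrK (bigD1 k) //= /zero_at eqxx add0r.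
by apply: eq_bigr => i /negbTE ->.
Qed.

End Redistribution.

Lemma sum_augment_on_mulmx (R : pzRingType) (T : finType) m n r
    (F D : T -> 'M[R]_(m, n)) (I : {set T}) (M : T -> 'M[R]_(n, r)) :
  \sum_i augment_on F D I i *m M i = \sum_i F i *m M i + \sum_(i in I) D i *m M i.
Proof.
rewrite -sum_augment_on; apply: eq_bigr => i _.
by rewrite /augment_on; case: ifP => // _; rewrite mulmxDl.
Qed.

Lemma sum_zero_at_mulmx (R : pzRingType) (T : finType) m n r
    (F : T -> 'M[R]_(m, n)) (k : T) (M : T -> 'M[R]_(n, r)) :
  \sum_i zero_at F k i *m M i = \sum_i F i *m M i - F k *m M k.
Proof.
rewrite -sum_zero_at; apply: eq_bigr => i _.
by rewrite /zero_at; case: ifP => // _; rewrite mul0mx.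
Qed.

Section Penalty.
Variables (R : realType) (T : finType) (lam : T -> R).
Hypothesis lam_ge0 : forall i, 0 <= lam i.

Lemma penalty_augment_on m n (F D : T -> 'M[R]_(m, n)) (I : {set T}) (y : R) :
  (forall i, i \in I -> nucnorm (D i) <= y) ->
  \sum_i lam i * nucnorm (augment_on F D I i)
    <= \sum_i lam i * nucnorm (F i) + (\sum_(i in I) lam i) * y.
Proof.
move=> D_le; rewrite mulr_suml [\sum_(i in I) _]big_mkcond -big_split /=.
apply: ler_sum => i _.
rewrite /augment_on; case: ifP => iI; last by rewrite addr0.
rewrite -mulrDr ler_wpM2l //; apply: le_trans (nucnormD_le _ _) _.
by rewrite lerD2l D_le.
Qed.

Lemma penalty_zero_at m n (F : T -> 'M[R]_(m, n)) (k : T) :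
  \sum_i lam i * nucnorm (zero_at F k i)
    = \sum_i lam i * nucnorm (F i) - lam k * nucnorm (F k).
Proof.
rewrite -(sum_zero_at (fun i => lam i * nucnorm (F i))); apply: eq_bigr => i _.
by rewrite /zero_at; case: ifP; rewrite ?nucnorm0 ?mulr0.
Qed.

Lemma penalty_transfer m n (F D : T -> 'M[R]_(m, n)) (I : {set T}) (k : T) (y : R) :
  (forall i, i \in I -> nucnorm (D i) <= y) ->
  (\sum_(i in I) lam i) * y <= lam k * nucnorm (F k) ->
  \sum_i lam i * nucnorm (augment_on (zero_at F k) D I i)
    <= \sum_i lam i * nucnorm (F i).
Proof.
move=> D_le y_le; apply: le_trans (penalty_augment_on _ D_le) _.
by rewrite penalty_zero_at -addrA gerDl addrC subr_le0.
Qed.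

End Penalty.

Section Objective.
Variables (R : realType) (J K L p q : nat) (nj : 'I_J -> nat).
Local Notation n := (\sum_(j < J) nj j)%N.
Variables (X : 'M[R]_(p, n)) (Y : 'M[R]_(q, n)).
Variables (CY : 'I_J -> 'I_K -> bool) (CS : 'I_J -> 'I_L -> bool).
Variables (lamB : 'I_K -> R) (lamS : 'I_L -> R).
Local Notation f := (fobj X Y CY lamB lamS).
Local Notation removable := (module_removable X Y CY CS lamB lamS).

Lemma fobj_le_of (B B' : 'I_K -> 'M[R]_(p, q)) (S S' : 'I_L -> 'M[R]_(p, n)) :
  \sum_k (B' k *m Yk Y CY k) + \sum_l S' l = \sum_k (B k *m Yk Y CY k) + \sum_l S l ->
  \sum_k lamB k * nucnorm (B' k) + \sum_l lamS l * nucnorm (S' l)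
    <= \sum_k lamB k * nucnorm (B k) + \sum_l lamS l * nucnorm (S l) ->
  f B' S' <= f B S.
Proof.
move=> fit pen; rewrite /fobj.
have XBS (M N : 'M[R]_(p, n)) : X - M - N = X - (M + N) by rewrite opprD addrA.
by rewrite !XBS fit -!addrA lerD2l.
Qed.

Lemma module_removable_of zero :
  (forall B S, feasible CS S -> exists B' S',
     [/\ feasible CS S', f B' S' <= f B S & zero B' S']) ->
  removable zero.
Proof.
move=> improve B S [feasS minS]; have [B' [S' [feasS' le_f zero']]] := improve B S feasS.
exists B', S'; split; [split; first exact: feasS' | exact: le_f | exact: zero'].
by move=> B'' S'' /(minS B'') /(le_trans le_f).
Qed.

Lemma feasible_augment_on (S D : 'I_L -> 'M[R]_(p, n)) (I : {set 'I_L}) :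
  feasible CS S -> (forall l, l \in I -> in_blockset (fun j => CS j l) (D l)) ->
  feasible CS (augment_on S D I).
Proof.
move=> feasS feasD l; rewrite /augment_on; case: ifP => lI; last exact: feasS.
exact: in_blocksetD (feasS l) (feasD l lI).
Qed.

Lemma feasible_zero_at (S : 'I_L -> 'M[R]_(p, n)) (k : 'I_L) :
  feasible CS S -> feasible CS (zero_at S k).
Proof.
by move=> feasS l; rewrite /zero_at; case: ifP => _; [exact: in_blockset0 | exact: feasS].
Qed.

Hypotheses (lamB_ge0 : forall k, 0 <= lamB k) (lamS_ge0 : forall l, 0 <= lamS l).

Lemma B_removable_by_B_cover (k : 'I_K) (I : {set 'I_K}) (c : nat) :
  k \notin I -> (0 < c)%N -> (forall j, \sum_(i in I) (CY j i : nat) = c * CY j k)%N ->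
  c%:R^-1 * \sum_(i in I) lamB i <= lamB k ->
  removable (fun B _ => B k = 0).
Proof.
move=> kI c_gt0 cover lam_le; apply: module_removable_of => B S feasS.
have c_neq0 : (c%:R : R) != 0 by rewrite pnatr_eq0 -lt0n.
pose B' := augment_on (zero_at B k) (fun=> c%:R^-1 *: B k) I.
exists B', S; split.
- exact: feasS.
- apply: fobj_le_of.
    rewrite sum_augment_on_mulmx sum_zero_at_mulmx -mulmx_sumr /Yk.
    rewrite (sum_maskblocks _ cover) -scalemxAl -scalemxAr scalerA mulVf //.
    by rewrite scale1r subrK.
  rewrite lerD2r; apply: (penalty_transfer lamB_ge0 (y := c%:R^-1 * nucnorm (B k))).
    by move=> i _; apply: nucnormZ_le; rewrite invr_ge0 ler0n.
  by rewrite mulrA [_ * c%:R^-1]mulrC ler_wpM2r // nucnorm_ge0.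
- by rewrite /B' /augment_on /zero_at (negbTE kI) eqxx.
Qed.

Lemma B_removable_by_S_cover (k : 'I_K) (I : {set 'I_L}) (c : nat) :
  (0 < c)%N -> (forall j, \sum_(i in I) (CS j i : nat) = c * CY j k)%N ->
  c%:R^-1 * \sum_(i in I) (lamS i * nucnorm (Yk Y CY k)) <= lamB k ->
  removable (fun B _ => B k = 0).
Proof.
move=> c_gt0 cover lam_le; apply: module_removable_of => B S feasS.
have c_neq0 : (c%:R : R) != 0 by rewrite pnatr_eq0 -lt0n.
pose M := B k *m Yk Y CY k.
pose D l := c%:R^-1 *: maskblocks (fun j => CS j l) M.
pose y := c%:R^-1 * (nucnorm (B k) * nucnorm (Yk Y CY k)).
have D_le l : l \in I -> nucnorm (D l) <= y.
  move=> _; apply: le_trans (nucnormZ_le _ _) _; first by rewrite invr_ge0 ler0n.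
  rewrite ler_wpM2l ?invr_ge0 ?ler0n // /M maskblocks_mulmx.
  apply: le_trans (nucnormM_le _ _) _.
  by rewrite ler_wpM2l ?nucnorm_ge0 ?nucnorm_maskblocks_le.
exists (zero_at B k), (augment_on S D I); split.
- apply: feasible_augment_on => // l _.
  exact/in_blocksetZ/in_blockset_maskblocks.
- apply: fobj_le_of.
    rewrite sum_zero_at_mulmx sum_augment_on -scaler_sumr (sum_maskblocks _ cover).
    rewrite maskblocks_id; last first.
      by rewrite /M /Yk -maskblocks_mulmx; exact: in_blockset_maskblocks.
    by rewrite scalerA mulVf // scale1r -/M addrA addrAC subrK.
  rewrite penalty_zero_at -addrA lerD2l addrC lerBlDr.
  apply: le_trans (penalty_augment_on lamS_ge0 S D_le) _; rewrite lerD2l.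
  have -> : (\sum_(l in I) lamS l) * y
      = c%:R^-1 * (\sum_(l in I) (lamS l * nucnorm (Yk Y CY k))) * nucnorm (B k).
    by rewrite /y -mulr_suml; ring.
  by rewrite ler_wpM2r // nucnorm_ge0.
- by rewrite /zero_at eqxx.
Qed.

Lemma S_removable_by_dominating_S (l l' : 'I_L) :
  l != l' -> (forall j, (CS j l' : nat) <= CS j l)%N -> lamS l <= lamS l' ->
  removable (fun _ S => S l' = 0).
Proof.
move=> ll' dom lam_le; apply: module_removable_of => B S feasS.
pose S' := augment_on (zero_at S l') (fun=> S l') [set l].
exists B, S'; split.
- apply: feasible_augment_on; first exact: feasible_zero_at.
  move=> i; rewrite in_set1 => /eqP -> j CSjl; apply: feasS.
  by move: (dom j); rewrite CSjl; case: (CS j l').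
- apply: fobj_le_of; first by rewrite sum_augment_on sum_zero_at big_set1 subrK.
  rewrite lerD2l; apply: (penalty_transfer lamS_ge0 (y := nucnorm (S l'))) => //.
  by rewrite big_set1 ler_wpM2r // nucnorm_ge0.
- by rewrite /S' /augment_on /zero_at in_set1 eq_sym (negbTE ll') eqxx.
Qed.

Lemma S_removable_by_S_cover (l : 'I_L) (I : {set 'I_L}) (c : nat) :
  l \notin I -> (0 < c)%N -> (forall j, \sum_(i in I) (CS j i : nat) = c * CS j l)%N ->
  c%:R^-1 * \sum_(i in I) lamS i <= lamS l ->
  removable (fun _ S => S l = 0).
Proof.
move=> lI c_gt0 cover lam_le; apply: module_removable_of => B S feasS.
have c_neq0 : (c%:R : R) != 0 by rewrite pnatr_eq0 -lt0n.
pose S' := augment_on (zero_at S l)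
  (fun i => c%:R^-1 *: maskblocks (fun j => CS j i) (S l)) I.
exists B, S'; split.
- apply: feasible_augment_on; first exact: feasible_zero_at.
  by move=> i _; exact/in_blocksetZ/in_blockset_maskblocks.
- apply: fobj_le_of.
    rewrite sum_augment_on sum_zero_at -scaler_sumr (sum_maskblocks _ cover).
    by rewrite maskblocks_id ?feasS // scalerA mulVf // scale1r subrK.
  rewrite lerD2l; apply: (penalty_transfer lamS_ge0 (y := c%:R^-1 * nucnorm (S l))).
    move=> i _; apply: le_trans (nucnormZ_le _ _) _; first by rewrite invr_ge0 ler0n.
    by rewrite ler_wpM2l ?invr_ge0 ?ler0n // nucnorm_maskblocks_le.
  by rewrite mulrA [_ * c%:R^-1]mulrC ler_wpM2r // nucnorm_ge0.
- by rewrite /S' /augment_on /zero_at (negbTE lI) eqxx.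
Qed.

End Objective.

Theorem proposition1 (R : realType) (J K L p q : nat) (nj : 'I_J -> nat)
  (X : 'M[R]_(p, \sum_(j < J) nj j)) (Y : 'M[R]_(q, \sum_(j < J) nj j))
  (CY : 'I_J -> 'I_K -> bool) (CS : 'I_J -> 'I_L -> bool)
  (lamB : 'I_K -> R) (lamS : 'I_L -> R) :
  (0 < J)%N -> (0 < p)%N -> (0 < q)%N -> (forall j, 0 < nj j)%N ->
  (forall k, 0 < lamB k) -> (forall l, 0 < lamS l) ->
  (* 1. failure of condition 1 for B_k *)
  (forall (k : 'I_K),
     (exists (I : {set 'I_K}) (c : nat),
        [/\ k \notin I, (0 < c)%N,
            (forall j, \sum_(i in I) (CY j i : nat) = c * CY j k)%N
          & (c%:R)^-1 * \sum_(i in I) lamB i <= lamB k]) ->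
     module_removable X Y CY CS lamB lamS (fun B _ => B k = 0))
  /\
  (* 2. failure of condition 2 for B_k *)
  (forall (k : 'I_K),
     (exists (I : {set 'I_L}) (c : nat),
        [/\ (0 < c)%N,
            (forall j, \sum_(i in I) (CS j i : nat) = c * CY j k)%N
          & (c%:R)^-1 * \sum_(i in I) (lamS i * nucnorm (Yk Y CY k)) <= lamB k]) ->
     module_removable X Y CY CS lamB lamS (fun B _ => B k = 0))
  /\
  (* 3. failure of condition 3 for S^(l') *)
  (forall (l l' : 'I_L),
     l != l' -> (forall j, (CS j l' : nat) <= CS j l)%N ->
     lamS l <= lamS l' ->
     module_removable X Y CY CS lamB lamS (fun _ S => S l' = 0))
  /\
  (* 4. failure of condition 4 for S^(l) *)
  (forall (l : 'I_L),
     (exists (I : {set 'I_L}) (c : nat),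
        [/\ l \notin I, (0 < c)%N,
            (forall j, \sum_(i in I) (CS j i : nat) = c * CS j l)%N
          & (c%:R)^-1 * \sum_(i in I) lamS i <= lamS l]) ->
     module_removable X Y CY CS lamB lamS (fun _ S => S l = 0)).
Proof.
(* Only the nonnegativity of the penalties matters. *)
move=> _ _ _ _ lamB_gt0 lamS_gt0.
have lamB_ge0 k : 0 <= lamB k by exact: ltW.
have lamS_ge0 l : 0 <= lamS l by exact: ltW.
split; [|split; [|split]].
- move=> k [I [c [kI c_gt0 cover lam_le]]].
  by apply: (B_removable_by_B_cover lamB_ge0 kI c_gt0 cover lam_le).
- move=> k [I [c [c_gt0 cover lam_le]]].
  by apply: (B_removable_by_S_cover lamS_ge0 c_gt0 cover lam_le).
- move=> l l' ll' dom lam_le.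
  by apply: (S_removable_by_dominating_S lamS_ge0 ll' dom lam_le).
- move=> l [I [c [lI c_gt0 cover lam_le]]].
  by apply: (S_removable_by_S_cover lamS_ge0 lI c_gt0 cover lam_le).
Qed.
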